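(* Let $(X,\mathbb{Z}^k,T)$ be a continuum-wise expansive $\mathbb{Z}^k$-action with expansivity constant $2c>0$. Then there is $\delta>0$ with the following property. If $A\in C(X)$ and $N\ge1$ satisfy $$c\le\max\{\mathrm{diam}\,T^n(A): n\in[-N,N]^k\}\le 2c,$$ then $$\max\{\mathrm{diam}\,T^n(A): n\in\partial[-N,N]^k\}>\delta.$$
   Context: $X$ is a compact metric space with metric $d$, and $T\colon\mathbb{Z}^k\times X\to X$ is a continuous action. $C(X)$ is the set of nonempty connected closed subsets of $X$. A set is nondegenerate if it has at least two points. A constant $c'>0$ is an expansivity constant, and the action is continuum-wise expansive, if for every nondegenerate $A\in C(X)$ there is $n\in\mathbb{Z}^k$ with $\mathrm{diam}\,T^n(A)>c'$. $[-N,N]^k=\{(n_i)\in\mathbb{Z}^k: -N\le n_i\le N\}$ and $\partial[-N,N]^k=\{(n_i)\in[-N,N]^k: n_j\in\{-N,N\}\text{ for some }j\}$. *)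

From HB Require Import structures.
From mathcomp Require Import all_boot all_order all_algebra.
From mathcomp Require Import all_classical all_reals all_analysis.
Set Implicit Arguments. Unset Strict Implicit. Unset Printing Implicit Defensive.
Import Order.TTheory GRing.Theory Num.Theory.
Local Open Scope classical_set_scope.
Local Open Scope ring_scope.

Definition zvec (k : nat) := 'I_k -> int.

Definition diam {R : realType} {X : metricType R} (A : set X) : R :=
  sup [set mdist x y | x in A & y in A].

Definition continuous_action {R : realType} {X : metricType R} (k : nat)
    (T : zvec k -> X -> X) : Prop :=
  (forall n, continuous (T n)) /\
  T (fun _ => 0) = id /\
  (forall m n : zvec k, T (fun i => m i + n i) = T m \o T n).

Definition is_continuum {R : realType} {X : metricType R} (A : set X) : Prop :=
  A !=set0 /\ connected A /\ closed A.

Definition nondegenerate {X : Type} (A : set X) : Prop :=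
  exists x y, A x /\ A y /\ x <> y.

Definition cw_expansive {R : realType} {X : metricType R} (k : nat)
    (T : zvec k -> X -> X) (c' : R) : Prop :=
  0 < c' /\
  forall A : set X, is_continuum A -> nondegenerate A ->
    exists n : zvec k, c' < diam (T n @` A).

Definition cube (k N : nat) (n : zvec k) : Prop :=
  forall i, - (N%:Z) <= n i <= N%:Z.

Definition cube_boundary (k N : nat) (n : zvec k) : Prop :=
  cube N n /\ exists j, n j = - (N%:Z) \/ n j = N%:Z.

From Pilot Require Import Defs.
From HB Require Import structures.
From mathcomp Require Import all_boot all_order all_algebra.
From mathcomp Require Import all_classical all_reals all_analysis.
From mathcomp Require Import lra zify.
Import Order.TTheory GRing.Theory Num.Theory.
Local Open Scope classical_set_scope.
Local Open Scope ring_scope.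
Import metricType_numDomainType.
Set Implicit Arguments.
Unset Strict Implicit.

(* The proof is by contradiction, through ultralimits.  If no delta works,
   then for every m there are a continuum A_m, a cube [-N_m, N_m]^k and a
   point n_m of it with diam T^(n_m)(A_m) >= c, diam T^n(A_m) <= 2c on the
   cube, and diam T^n(A_m) <= 1/(m+1) on the boundary of the cube.  Fix an
   ultrafilter U on nat finer than the cofinite filter.  In the compact space
   X every sequence has a U-limit, and the U-limit set B of the continua
   B_m = T^(n_m)(A_m) (the points all of whose neighbourhoods meet B_m for
   U-many m) is closed and connected, and it is nondegenerate because every
   B_m has diameter >= c.  As the boundary images shrink to points, continuity
   of T^(-v) shows that n_m + v lies on the boundary of the cube for U-few m
   only; hence n_m + v stays in the cube for U-many m, which gives
   diam T^v(B) <= 2c for every v and contradicts continuum-wise expansivity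
   with constant 2c. *)

Section MetricFacts.
Variables (R : realType) (X : metricType R).

Lemma le_diam (D : R) (S : set X) x y : (forall x y : X, mdist x y <= D) ->
  S x -> S y -> mdist x y <= diam S.
Proof.
move=> HD Sx Sy; apply: ub_le_sup; first by exists D => _ [a _ [b _ <-]].
by exists x => //; exists y.
Qed.

Lemma diam_gtP (S : set X) r : 0 <= r -> r < diam S ->
  exists x y, S x /\ S y /\ r < mdist x y.
Proof.
move=> r0 r_lt; apply: contrapT => noxy; move: r_lt; apply/negP; rewrite -leNgt /diam.
have [->|ne] := eqVneq [set mdist x y | x in S & y in S] set0; first by rewrite sup0.
apply: ge_sup; first exact/set0P.
move=> _ [a Sa [b Sb <-]]; rewrite leNgt; apply/negP => r_ab.
by apply: noxy; exists a, b.
Qed.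

Lemma continuous_mdist (f : X -> X) x e : continuous f -> 0 < e ->
  exists2 d, 0 < d & forall y, mdist x y < d -> mdist (f x) (f y) < e.
Proof.
move=> cf e0.
have near_fx : \forall t \near x, mdist (f x) (f t) < e := cvgr_dist_lt (cf x) e0.
have [d d0 Hd] := (@nbhs_mdistP R X x _).1 (near_fx _).
by exists d => // y xy; apply: Hd.
Qed.

Definition nbhd_set (S : set X) (r : R) : set X :=
  [set x | exists2 p, S p & mdist p x < r].

Lemma open_nbhd_set (S : set X) r : open (nbhd_set S r).
Proof.
rewrite openE => x [p Sp px].
apply/(@nbhs_mdistP R X x); exists (r - mdist p x); first by rewrite /= subr_gt0.
move=> y /= xy; exists p => //.
by apply: le_lt_trans (metric_triangle _ x _) _; lra.
Qed.

Lemma nbhd_set_disjoint (P Q : set X) eta :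
  (forall p q, P p -> Q q -> eta <= mdist p q) ->
  forall x, nbhd_set P (eta / 2) x -> nbhd_set Q (eta / 2) x -> False.
Proof.
move=> sepPQ x [p Pp px] [q Qq qx]; have := sepPQ _ _ Pp Qq.
by have := metric_triangle p x q; rewrite (metric_sym x q); lra.
Qed.

End MetricFacts.

Lemma connected_gap (Y : topologicalType) (S V W : set Y) :
  connected S -> open V -> open W -> (forall x, V x -> W x -> False) ->
  S `&` V !=set0 -> S `&` W !=set0 -> exists2 w, S w & ~ V w /\ ~ W w.
Proof.
move=> cS oV oW dVW SV [y [Sy Wy]]; apply: contrapT => covered.
have SVW w : S w -> V w \/ W w.
  move=> Sw; apply: contrapT => nVW; apply: covered; exists w => //.
  by split => ?; apply: nVW; [left|right].
suff SV_S : S `&` V = S.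
  have [_ Vy] : (S `&` V) y by rewrite SV_S.
  exact: dVW Vy Wy.
apply: cS => //; first by exists V.
exists (~` W); first exact: open_closedC.
apply/seteqP; split => w [Sw h]; split => //=.
  by move=> /(dVW _ h).
by case: (SVW w Sw).
Qed.

Section Ultralimits.
Variables (R : realType) (X : metricType R).
Hypothesis cX : compact [set: X].
Variable U : set_system nat.
Hypothesis UU : UltraFilter U.
Hypothesis U_cofinite : \oo `<=` U.

Definition ulim (z : nat -> X) (p : X) : Prop :=
  forall e, 0 < e -> U [set m | mdist p (z m) < e].

Lemma ulim_exists (z : nat -> X) : exists p, ulim z p.
Proof.
have [|p [_ clp]] := @cX (z @ U) _.
  by rewrite /= /fmap /= preimage_setT; exact: filterT.
exists p => e e0.
have [//|far] := in_ultra_setVsetC [set m | mdist p (z m) < e] UU.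
have [x [/= nx]] := clp [set x | ~ mdist p x < e] (ball p e) far (nbhsx_ballx _ _ e0).
by rewrite ballEmdist.
Qed.

Lemma closed_ulim (S : set X) (z : nat -> X) q : closed S ->
  ulim z q -> U [set m | S (z m)] -> S q.
Proof.
move=> cS zq Sz; apply: cS => W /(@nbhs_mdistP R X q W) [e e0 qeW].
have [m [Szm qm]] := filter_ex (filterI Sz (zq e e0)).
by exists (z m); split => //; apply: qeW.
Qed.

Lemma U_inv_small (e : R) : 0 < e -> U [set m | m.+1%:R^-1 < e].
Proof.
move=> e0; apply: U_cofinite; exists (Num.truncn e^-1).+1 => // m /= hm.
rewrite invf_plt ?posrE ?ltr0Sn//.
by apply: (lt_le_trans (truncnS_gt _)); rewrite ler_nat; exact: ltnW.
Qed.

Lemma mdist_bounded : exists D, forall x y : X, mdist x y <= D.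
Proof.
apply/not_existsP => unbounded.
have far j : exists xy : X * X, j%:R < mdist xy.1 xy.2.
  have /existsNP [x /existsNP [y]] := unbounded j%:R.
  by move=> /negP; rewrite -ltNge => ?; exists (x, y).
have [xy Hxy] := choice far.
have [x Hx] := ulim_exists (fun j => (xy j).1).
have [y Hy] := ulim_exists (fun j => (xy j).2).
pose M := Num.truncn (mdist x y + 2).
have [m [/= Mm [x_m y_m]]] := filter_ex
  (filterI (U_cofinite (nbhs_infty_ge M.+1)) (filterI (Hx _ ltr01) (Hy _ ltr01))).
have := Hxy m; apply/negP; rewrite -leNgt.
rewrite (le_trans (metric_triangle _ x _))// metric_sym.
rewrite (le_trans (lerD (ltW x_m) (metric_triangle _ y _)))//.
have M_gt := truncnS_gt (mdist x y + 2).
have M_le : (M.+1%:R <= m%:R :> R) by rewrite ler_nat.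
by apply/ltW/(lt_le_trans _ M_le)/(le_lt_trans _ M_gt); lra.
Qed.

Lemma closed_disjoint_sep (P Q : set X) : closed P -> closed Q ->
  (forall x, P x -> Q x -> False) ->
  exists2 eta, 0 < eta & forall p q, P p -> Q q -> eta <= mdist p q.
Proof.
move=> cP cQ dPQ; apply: contrapT => close.
have near_pairs j : exists pq : X * X,
    P pq.1 /\ Q pq.2 /\ mdist pq.1 pq.2 < j.+1%:R^-1.
  apply: contrapT => Hj; apply: close; exists j.+1%:R^-1 => // p q Pp Qq.
  by rewrite leNgt; apply/negP => h; apply: Hj; exists (p, q).
have [pq Hpq] := choice near_pairs.
have [r Hr] := ulim_exists (fun j => (pq j).1).
apply: (dPQ r).
  by apply: (closed_ulim cP Hr); apply: filterS filterT => j _; case: (Hpq j).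
apply: (closed_ulim (z := fun j => (pq j).2) cQ); last first.
  by apply: filterS filterT => j _; case: (Hpq j) => _ [].
move=> e e0; have e2 : 0 < e / 2 by rewrite divr_gt0.
apply: filterS (filterI (Hr _ e2) (U_inv_small e2)) => j [/= r_j j_small].
have [_ [_ pq_j]] := Hpq j; move: j_small pq_j; set s := j.+1%:R^-1 => ? ?.
by apply: le_lt_trans (metric_triangle _ (pq j).1 _) _; lra.
Qed.

Lemma U_choice (Y : Type) (y0 : Y) (Pm : nat -> Y -> Prop) :
  U [set m | exists y, Pm m y] -> exists z : nat -> Y, U [set m | Pm m (z m)].
Proof.
move=> UP.
have pick m : exists y, (exists y', Pm m y') -> Pm m y.
  case: (pselect (exists y', Pm m y')) => [[y Py]|none]; first by exists y.
  by exists y0 => /none.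
by have [z Hz] := choice pick; exists z; apply: filterS UP => m /Hz.
Qed.

Section LimitSet.
Variable Bs : nat -> set X.

Definition ulim_set : set X :=
  [set x | forall e, 0 < e -> U [set m | exists2 y, Bs m y & mdist x y < e]].

Lemma ulim_set_ulim (z : nat -> X) q :
  U [set m | Bs m (z m)] -> ulim z q -> ulim_set q.
Proof.
move=> Bz zq e e0; apply: filterS (filterI Bz (zq e e0)) => m [Bzm qm].
by exists (z m).
Qed.

Lemma ulim_set_closed : closed ulim_set.
Proof.
move=> x clx e e0; have e2 : 0 < e / 2 by rewrite divr_gt0.
have [x' [Bx' xx']] := clx _ (nbhsx_ballx x (e / 2) e2).
rewrite ballEmdist /= in xx'.
apply: filterS (Bx' _ e2) => m [y By x'y]; exists y => //.
by apply: le_lt_trans (metric_triangle _ x' _) _; lra.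
Qed.

Hypothesis Bs_connected : forall m, connected (Bs m).

(* If the limit set split into a part P and a nonempty rest Q, both closed,
   they would be at some distance eta.  For U-many m the connected set B_m
   comes close to both, so it has a point outside the eta/2-neighbourhoods
   of P and of Q; a U-limit of such points lies in the limit set but in
   neither part. *)
Lemma ulim_set_connected : connected ulim_set.
Proof.
move=> P [p0 Pp0] [C1 oC1 PC1] [C2 cC2 PC2]; apply: contrapT => P_proper.
have PB : P `<=` ulim_set by rewrite PC1 => x [].
have [b Bb nPb] : exists2 b, ulim_set b & ~ P b.
  apply: contrapT => noB; apply: P_proper; apply/seteqP; split => // x Bx.
  by apply: contrapT => nPx; apply: noB; exists x.
pose Q := ulim_set `\` P.
have cP : closed P by rewrite PC2; exact: closedI ulim_set_closed cC2.
have cQ : closed Q.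
  suff -> : Q = ulim_set `&` ~` C1 by exact: closedI ulim_set_closed (open_closedC oC1).
  rewrite /Q PC1; apply/seteqP; split => x /= [Bx h]; split => //.
    by move=> C1x; apply: h.
  by move=> [_ C1x]; exact: h C1x.
have [eta eta0 sepPQ] := closed_disjoint_sep cP cQ (fun x Px Qx => Qx.2 Px).
have e2 : 0 < eta / 2 by rewrite divr_gt0.
pose V := nbhd_set P (eta / 2); pose W := nbhd_set Q (eta / 2).
have gap : U [set m | exists w, Bs m w /\ ~ V w /\ ~ W w].
  apply: filterS (filterI (PB _ Pp0 _ e2) (Bb _ e2)) => m [[y1 By1 h1] [y2 By2 h2]].
  have [||w Bw nVW] := connected_gap (@Bs_connected m) (open_nbhd_set P _)
    (open_nbhd_set Q _) (nbhd_set_disjoint sepPQ).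
  - by exists y1; split => //; exists p0.
  - by exists y2; split => //; exists b.
  by exists w.
have [w Hw] := U_choice p0 gap.
have [r Hr] := ulim_exists w.
have Br : ulim_set r by apply: (ulim_set_ulim _ Hr); apply: filterS Hw => m [].
have [m [[_ [nV nW]] r_m]] := filter_ex (filterI Hw (Hr _ e2)).
by case: (pselect (P r)) => Pr; [apply: nV | apply: nW]; exists r.
Qed.

End LimitSet.

Section CounterexampleSequence.
Variables (k : nat) (T : zvec k -> X -> X) (c : R).
Hypothesis T_action : continuous_action T.
Hypothesis c_gt0 : 0 < c.
Variables (A : nat -> set X) (N : nat -> nat) (n0 : nat -> zvec k).
Hypothesis A_continuum : forall m, is_continuum (A m).
Hypothesis n0_cube : forall m, cube (N m) (n0 m).
Hypothesis n0_large : forall m, c <= diam (T (n0 m) @` A m).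
Hypothesis cube_small : forall m n, cube (N m) n -> diam (T n @` A m) <= 2 * c.
Hypothesis boundary_tiny :
  forall m n, cube_boundary (N m) n -> diam (T n @` A m) <= m.+1%:R^-1.

Lemma T_continuous n : continuous (T n).
Proof. by case: T_action. Qed.

Lemma T_comp (m n : zvec k) x : T m (T n x) = T (fun i => m i + n i) x.
Proof. by case: T_action => _ [_ ->]. Qed.

Lemma far_points : exists xs ys : nat -> X, forall m,
  A m (xs m) /\ A m (ys m) /\ c / 2 < mdist (T (n0 m) (xs m)) (T (n0 m) (ys m)).
Proof.
have far m : exists xy : X * X, A m xy.1 /\ A m xy.2 /\
    c / 2 < mdist (T (n0 m) xy.1) (T (n0 m) xy.2).
  have c2_lt : c / 2 < diam (T (n0 m) @` A m).
    by apply: lt_le_trans (n0_large m); rewrite ltr_pdivrMr// ltr_pMr// ltr1n.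
  have [_ [_ [[a Aa <-] [[b Ab <-] ab]]]] :=
    diam_gtP (divr_ge0 (ltW c_gt0) (ler0n _ 2)) c2_lt.
  by exists (a, b).
have [f Hf] := choice far; by exists (fun m => (f m).1), (fun m => (f m).2).
Qed.

(* A fixed shift of n0 m lands on the boundary of the cube for U-few m only:
   otherwise the images by T^(n0 m + v) of two far points would U-converge to
   a single point, and applying the continuous map T^(-v) would bring their
   images by T^(n0 m) closer than c/2. *)
Lemma boundary_rare (v : zvec k) :
  ~ U [set m | cube_boundary (N m) (fun i => n0 m i + v i)].
Proof.
move=> onbd; have [xs [ys far]] := far_points.
pose p m : zvec k := fun i => n0 m i + v i.
pose g := T (fun i => - v i).
have g_back m x : g (T (p m) x) = T (n0 m) x.
  rewrite /g T_comp; congr T; apply/funext => i /=.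
  by rewrite /p addrCA addNr addr0.
have [q Hq] := ulim_exists (fun m => T (p m) (xs m)).
have [d d0 Hd] := continuous_mdist q (@T_continuous (fun i => - v i))
  (divr_gt0 c_gt0 (ltr0n _ 4)).
have d2 : 0 < d / 2 by rewrite divr_gt0.
have [m [bd_m [/= q_m m_small]]] :=
  filter_ex (filterI onbd (filterI (Hq _ d2) (U_inv_small d2))).
have [Ax [Ay far_m]] := far m.
have [D HD] := mdist_bounded.
have close : mdist (T (p m) (xs m)) (T (p m) (ys m)) <= m.+1%:R^-1.
  apply: le_trans (boundary_tiny bd_m).
  by apply: (le_diam HD); [exists (xs m) | exists (ys m)].
move: m_small close; set s := m.+1%:R^-1 => m_small close.
have qx : mdist q (T (p m) (xs m)) < d by lra.
have qy : mdist q (T (p m) (ys m)) < d.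
  by apply: le_lt_trans (metric_triangle _ (T (p m) (xs m)) _) _; lra.
have := Hd _ qx; have := Hd _ qy; move: far_m; rewrite -!g_back.
have := metric_triangle (g (T (p m) (xs m))) (g q) (g (T (p m) (ys m))).
by rewrite (metric_sym (g (T (p m) (xs m))) (g q)); lra.
Qed.

Definition unit_shift (j : 'I_k) (t : int) : zvec k :=
  fun i => if i == j then t else 0.

(* Each coordinate of n0 m + u e_j stays in [-N m, N m] for U-many m: walking
   from n0 m one unit at a time, leaving the range would require a step
   from the boundary, which is U-rare. *)
Lemma shift_coord_in_range (j : 'I_k) (n : nat) : forall u : int, (`|u| <= n)%N ->
  U [set m | - (N m)%:Z <= n0 m j + u <= (N m)%:Z].
Proof.
elim: n => [u|n IH u u_n].
  rewrite leqn0 absz_eq0 => /eqP ->.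
  by apply: filterS filterT => m _ /=; rewrite addr0; exact: n0_cube.
pose u' : int := if 0 < u then u - 1 else if u < 0 then u + 1 else u.
have u'_n : (`|u'| <= n)%N by rewrite /u'; case: (ltP 0 u) => ?; case: (ltP u 0) => ?; lia.
have [//|out] := in_ultra_setVsetC [set m | - (N m)%:Z <= n0 m j + u <= (N m)%:Z] UU.
exfalso; apply: (@boundary_rare (unit_shift j u')).
apply: filterS (filterI (IH _ u'_n) out) => m [/= in' out_m]; split.
  move=> i; rewrite /unit_shift; case: eqP => [->//|_].
  by rewrite addr0; exact: n0_cube.
exists j; rewrite /unit_shift eqxx.
by move/negP: out_m; move: in'; rewrite /u'; case: (ltP 0 u) => ?; case: (ltP u 0) => ?; lia.
Qed.

Lemma shift_in_cube (v : zvec k) : U [set m | cube (N m) (fun i => n0 m i + v i)].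
Proof.
have in_range (s : seq 'I_k) : U [set m | forall j, j \in s ->
    - (N m)%:Z <= n0 m j + v j <= (N m)%:Z].
  elim: s => [|j s IH]; first by apply: filterS filterT => m _ j.
  apply: filterS (filterI (@shift_coord_in_range j _ (v j) (leqnn _)) IH) => m [h1 h2] i.
  by rewrite in_cons => /orP[/eqP->|/h2].
by apply: filterS (in_range (enum 'I_k)) => m h i; apply: h; rewrite mem_enum.
Qed.

Definition limit_continuum : set X := ulim_set (fun m => T (n0 m) @` A m).

Lemma limit_continuum_nondegenerate : Defs.nondegenerate limit_continuum.
Proof.
have [xs [ys far]] := far_points.
have [qx Hx] := ulim_exists (fun m => T (n0 m) (xs m)).
have [qy Hy] := ulim_exists (fun m => T (n0 m) (ys m)).
exists qx, qy; split; [|split].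
- apply: ulim_set_ulim _ Hx; apply: filterS filterT => m _ /=.
  by exists (xs m) => //; case: (far m).
- apply: ulim_set_ulim _ Hy; apply: filterS filterT => m _ /=.
  by exists (ys m) => //; case: (far m) => _ [].
move=> qxy; subst qy.
have [m [/= x_m y_m]] := filter_ex (filterI (Hx _ (divr_gt0 c_gt0 (ltr0n _ 4)))
  (Hy _ (divr_gt0 c_gt0 (ltr0n _ 4)))).
have [_ [_ far_m]] := far m.
have := metric_triangle (T (n0 m) (xs m)) qx (T (n0 m) (ys m)).
by rewrite (metric_sym _ qx); lra.
Qed.

Lemma limit_continuum_is_continuum : is_continuum limit_continuum.
Proof.
have [x [_ [Bx _]]] := limit_continuum_nondegenerate.
split; first by exists x.
split; last exact: ulim_set_closed.
apply: ulim_set_connected => m; apply: connected_continuous_connected.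
  by case: (A_continuum m) => _ [].
exact/continuous_subspaceT/T_continuous.
Qed.

(* Every image T^v(B) of the limit continuum has diameter at most 2c, since
   n0 m + v lies in the cube for U-many m. *)
Lemma limit_continuum_images_small (v : zvec k) x y :
  limit_continuum x -> limit_continuum y -> mdist (T v x) (T v y) <= 2 * c.
Proof.
move=> Bx By; apply/ler_addgt0Pr => e e0.
have e2 : 0 < e / 2 by rewrite divr_gt0.
have [dx dx0 Hx] := continuous_mdist x (@T_continuous v) e2.
have [dy dy0 Hy] := continuous_mdist y (@T_continuous v) e2.
have [m [[_ [a Aa <-] x_a] [[_ [b Ab <-] y_b] in_cube]]] :=
  filter_ex (filterI (Bx _ dx0) (filterI (By _ dy0) (@shift_in_cube v))).
have [D HD] := mdist_bounded.
have ab : mdist (T v (T (n0 m) a)) (T v (T (n0 m) b)) <= 2 * c.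
  have shifted : cube (N m) (fun i => v i + n0 m i).
    by move=> i; rewrite addrC; exact: in_cube.
  rewrite !T_comp; apply: le_trans (cube_small shifted).
  by apply: (le_diam HD); [exists a | exists b].
have := Hx _ x_a; have := Hy _ y_b.
have := metric_triangle (T v x) (T v (T (n0 m) a)) (T v y).
have := metric_triangle (T v (T (n0 m) a)) (T v (T (n0 m) b)) (T v y).
by rewrite (metric_sym (T v (T (n0 m) b))); lra.
Qed.

Lemma counterexample_sequence_absurd : cw_expansive T (2 * c) -> False.
Proof.
move=> [_ /(_ _ limit_continuum_is_continuum limit_continuum_nondegenerate)].
move=> [v large].
have [_ [_ [[x Bx <-] [[y By <-] xy]]]] :=
  diam_gtP (mulr_ge0 (ler0n _ 2) (ltW c_gt0)) large.
by move: xy; rewrite ltNge limit_continuum_images_small.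
Qed.

End CounterexampleSequence.
End Ultralimits.

Theorem lemma4p3 (R : realType) (X : metricType R) (k : nat)
    (T : zvec k -> X -> X) (c : R) :
  compact [set: X] ->
  continuous_action T ->
  0 < c ->
  cw_expansive T (2 * c) ->
  exists delta : R, 0 < delta /\
    forall (A : set X) (N : nat),
      is_continuum A -> (1 <= N)%N ->
      (exists n, cube N n /\ c <= diam (T n @` A)) ->
      (forall n, cube N n -> diam (T n @` A) <= 2 * c) ->
      exists n, cube_boundary N n /\ delta < diam (T n @` A).
Proof.
move=> cX cT c0 cw; apply: contrapT => no_delta.
(* A failure of delta = 1/(m+1) for every m gives a counterexample sequence. *)
have fails m : exists A : set X, exists N : nat, exists n : zvec k,
    [/\ is_continuum A, cube N n, c <= diam (T n @` A),
     (forall n, cube N n -> diam (T n @` A) <= 2 * c) &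
     (forall n, cube_boundary N n -> diam (T n @` A) <= m.+1%:R^-1)].
  apply: contrapT => Hm; apply: no_delta; exists m.+1%:R^-1; split => //.
  move=> A N cA _ [n [cn hn]] h2; apply: contrapT => nb; apply: Hm.
  exists A, N, n; split => // n' bd'; rewrite leNgt; apply/negP => hlt.
  by apply: nb; exists n'.
have [A /choice [N /choice [n0 Hseq]]] := choice fails.
have [U [UU U_cofinite]] := @ultraFilterLemma nat \oo _.
apply: (counterexample_sequence_absurd cX UU U_cofinite cT c0
  (A := A) (N := N) (n0 := n0) _ _ _ _ _ cw) => m; by case: (Hseq m).
Qed.
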